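(* Let $G$ be a graph of order $n\geq 3$, and let $u$ and $v$ be non-adjacent vertices of $G$. Then $$C(G+uv)\leq C(G)+\left(1-\frac{2}{n}+\frac{4}{n(n-1)}\right),$$ with equality if and only if $G$ is the complete bipartite graph $K_{2,n-2}$ and $u$ and $v$ are the two vertices of degree $n-2$ in $G$.
   Context: All graphs are finite and simple; $G+uv$ denotes the graph obtained from $G$ by adding the edge $uv$. For a vertex $w$ of a graph $G$, $N_G(w)$ is its neighborhood, $d_G(w)$ its degree, and $m(G[N_G(w)])$ the number of edges of the subgraph induced by $N_G(w)$. The clustering coefficient of $w$ in $G$ is $C_w(G)=m(G[N_G(w)])/\binom{d_G(w)}{2}$ if $d_G(w)\geq 2$, and $C_w(G)=0$ otherwise. The clustering coefficient of $G$ is $C(G)=\frac{1}{n(G)}\sum_{w\in V(G)}C_w(G)$, where $n(G)$ is the order of $G$. *)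

(* A simple graph on a finite vertex type T is a
   symmetric irreflexive relation e : rel T. *)
From HB Require Import structures.
From mathcomp Require Import all_boot all_order all_algebra.
Set Implicit Arguments. Unset Strict Implicit. Unset Printing Implicit Defensive.
Import Order.TTheory GRing.Theory Num.Theory.

Section Graphs.
Variable T : finType.

Definition add_edge (e : rel T) (u v : T) : rel T :=
  fun x y => [|| e x y, (x == u) && (y == v) | (x == v) && (y == u)].

Definition nbhd (e : rel T) (w : T) : {set T} := [set x | e w x].

Definition deg (e : rel T) (w : T) : nat := #|nbhd e w|.

Definition induced_edges (e : rel T) (S : {set T}) : {set {set T}} :=
  [set P : {set T} | (P \subset S) &&
     [exists x : T, exists y : T, e x y && (P == [set x; y])]].

Definition m_nbhd (e : rel T) (w : T) : nat := #|induced_edges e (nbhd e w)|.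

Definition clust_vertex (e : rel T) (w : T) : rat :=
  if 2 <= deg e w then ((m_nbhd e w)%:R / ('C(deg e w, 2))%:R)%R else 0%R.

Definition clust (e : rel T) : rat :=
  ((\sum_(w : T) clust_vertex e w) / (#|T|)%:R)%R.

Definition complete_bipartite_on (e : rel T) (A : {set T}) : Prop :=
  forall x y : T, e x y = ((x \in A) != (y \in A)).

End Graphs.

(* Adding uv changes the local clustering only at u, v and at their c common
   neighbours.  A common neighbour w keeps its degree and gains one edge in its
   neighbourhood, so C_w grows by 1 / C(d_w, 2) <= 1.  At u the degree grows by
   one and c edges appear in the neighbourhood, so C_u grows by at most
   c / C(d_u + 1, 2) <= c / C(c + 1, 2); likewise at v.  The total gain
   c + 2c / C(c + 1, 2) is strictly increasing in c <= n - 2, which gives the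
   bound; equality forces c = n - 2 and d_w = 2 for every w other than u and v,
   i.e. G = K_{2,n-2} with parts {u, v} and the rest. *)

From HB Require Import structures.
From mathcomp Require Import all_boot all_order all_algebra.
From mathcomp Require Import ring lra.
Import Order.TTheory GRing.Theory Num.Theory.
Set Implicit Arguments. Unset Strict Implicit. Unset Printing Implicit Defensive.

Section InducedEdges.
Variables (T : finType) (e : rel T).
Hypotheses (e_sym : symmetric e) (e_irr : irreflexive e).

Lemma induced_edgesP (S P : {set T}) :
  reflect (P \subset S /\ exists x y, e x y /\ P = [set x; y])
          (P \in induced_edges e S).
Proof.
rewrite inE; apply: (iffP andP) => -[sub ex]; split=> //.
  by case/existsP: ex => x /existsP [y /andP [exy /eqP ->]]; exists x, y.
by case: ex => x [y [exy ->]]; apply/existsP; exists x; apply/existsP; exists y;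
  rewrite exy eqxx.
Qed.

Lemma card_induced_edges_le (S : {set T}) :
  (#|induced_edges e S| <= 'C(#|S|, 2))%N.
Proof.
rewrite -cards_draws; apply/subset_leq_card/subsetP => P /induced_edgesP.
case=> sub [x [y [exy defP]]].
have xy : x != y by apply: contraTneq exy => ->; rewrite e_irr.
by rewrite inE sub defP cards2 xy.
Qed.

Lemma induced_edgesU1 (w : T) (S : {set T}) :
  induced_edges e (w |: S) =
  induced_edges e S :|: [set [set w; x] | x in S :&: nbhd e w].
Proof.
apply/setP => P; rewrite in_setU; apply/induced_edgesP/orP.
- case=> sub [x [y [exy defP]]].
  have [wP|wNP] := boolP (w \in P); [right | left]; last first.
    apply/induced_edgesP; split; last by exists x, y.
    apply/subsetP => z zP; move: (subsetP sub z zP); rewrite in_setU1.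
    by case/orP=> // /eqP zw; move: wNP; rewrite -zw zP.
  suff [z ezw defPz] : exists2 z, e w z & P = [set w; z].
    have /subsetP/(_ z) := sub; rewrite defPz !inE eqxx orbT => /(_ isT).
    case/orP=> [/eqP zw|zS]; first by move: ezw; rewrite zw e_irr.
    by apply/imsetP; exists z; rewrite // !inE zS.
  move: wP; rewrite defP !inE => /orP [/eqP->|/eqP->]; first by exists y.
  by exists x; rewrite 1?e_sym // setUC.
- case=> [/induced_edgesP [sub edge]|/imsetP [x]]; last first.
    rewrite !inE => /andP [xS ewx] ->; split; last by exists w, x.
    by apply/subsetP => z; rewrite !inE => /orP [->|/eqP->]; rewrite ?xS ?orbT.
  by split=> //; apply: subset_trans sub (subsetUr _ _).
Qed.

Lemma card_induced_edgesU1 (w : T) (S : {set T}) : w \notin S ->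
  #|induced_edges e (w |: S)| = (#|induced_edges e S| + #|S :&: nbhd e w|)%N.
Proof.
move=> wNS; rewrite induced_edgesU1 cardsU.
have -> : induced_edges e S :&: [set [set w; x] | x in S :&: nbhd e w] = set0.
  apply/setP => P; rewrite in_setI in_set0.
  apply/andP => -[/induced_edgesP [sub _] /imsetP [x _ defP]].
  by move: wNS; rewrite (subsetP sub) // defP !inE eqxx.
rewrite cards0 subn0 card_in_imset // => x y; rewrite !inE => /andP [xS _] _.
move=> /setP /(_ x); rewrite !inE eqxx orbT => /esym /orP [/eqP xw|/eqP //].
by move: wNS; rewrite -xw xS.
Qed.

End InducedEdges.

Section AddEdge.
Variables (T : finType) (e : rel T) (u v : T).
Hypotheses (e_sym : symmetric e) (e_irr : irreflexive e).
Hypotheses (huv : u != v) (hnadj : ~~ e u v).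
Local Notation e' := (add_edge e u v).

Definition common_nbhd := nbhd e u :&: nbhd e v.

Lemma nbhd_add_edge_l : nbhd e' u = v |: nbhd e u.
Proof.
by apply/setP => x; rewrite !inE /add_edge eqxx (negbTE huv) /= orbF orbC.
Qed.

Lemma nbhd_add_edge_r : nbhd e' v = u |: nbhd e v.
Proof.
by apply/setP => x; rewrite !inE /add_edge eqxx eq_sym (negbTE huv) /= orbC.
Qed.

Lemma nbhd_add_edge_other w : w != u -> w != v -> nbhd e' w = nbhd e w.
Proof.
move=> wu wv; apply/setP => x.
by rewrite !inE /add_edge (negbTE wu) (negbTE wv) /= orbF.
Qed.

Lemma induced_edges_add_edge (S : {set T}) : ~~ ((u \in S) && (v \in S)) ->
  induced_edges e' S = induced_edges e S.
Proof.
move=> uvNS; apply/setP => P.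
apply/induced_edgesP/induced_edgesP => -[sub [x [y [exy defP]]]]; split=> //.
  have xyS : (x \in S) && (y \in S).
    by rewrite !(subsetP sub) // defP !inE eqxx ?orbT.
  exists x, y; split=> //; move: exy; rewrite /add_edge.
  by case/or3P=> // /andP [/eqP xu /eqP yv];
    move: uvNS xyS; rewrite xu yv andbC => /negP.
by exists x, y; rewrite /add_edge exy.
Qed.

Lemma induced_edges_add_edge_both (S : {set T}) : u \in S -> v \in S ->
  induced_edges e' S = [set u; v] |: induced_edges e S.
Proof.
move=> uS vS; apply/setP => P; rewrite in_setU1.
apply/induced_edgesP/orP => [[sub [x [y [exy defP]]]]|].
  case/or3P: exy => [exy|/andP [/eqP xu /eqP yv]|/andP [/eqP xv /eqP yu]].
  - by right; apply/induced_edgesP; split=> //; exists x, y.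
  - by left; rewrite defP xu yv.
  - by left; rewrite defP xv yu setUC.
case=> [/eqP ->|/induced_edgesP [sub [x [y [exy defP]]]]].
  split; first by apply/subsetP => z; rewrite !inE => /orP [] /eqP ->.
  by exists u, v; rewrite /add_edge !eqxx orbT.
by split=> //; exists x, y; rewrite /add_edge exy.
Qed.

Lemma nonedge_notin_induced_edges (S : {set T}) :
  [set u; v] \notin induced_edges e S.
Proof.
apply/induced_edgesP => -[_ [x [y [exy /setP defuv]]]].
have /set2P [uxy|uxy] : u \in [set x; y] by rewrite -defuv set21.
all: have /set2P [vxy|vxy] : v \in [set x; y] by rewrite -defuv set22.
all: by move: huv hnadj; rewrite uxy vxy ?eqxx ?exy // e_sym exy.
Qed.

Lemma in_common_nbhd w : (w \in common_nbhd) = e w u && e w v.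
Proof. by rewrite !inE (e_sym u) (e_sym v). Qed.

Lemma deg_add_edge_l : deg e' u = (deg e u).+1.
Proof. by rewrite /deg nbhd_add_edge_l cardsU1 inE hnadj. Qed.

Lemma deg_add_edge_r : deg e' v = (deg e v).+1.
Proof. by rewrite /deg nbhd_add_edge_r cardsU1 inE e_sym hnadj. Qed.

Lemma m_nbhd_add_edge_l : m_nbhd e' u = (m_nbhd e u + #|common_nbhd|)%N.
Proof.
rewrite /m_nbhd nbhd_add_edge_l induced_edges_add_edge; last first.
  by rewrite !inE e_irr (negbTE huv).
by rewrite card_induced_edgesU1 // inE hnadj.
Qed.

Lemma m_nbhd_add_edge_r : m_nbhd e' v = (m_nbhd e v + #|common_nbhd|)%N.
Proof.
rewrite /m_nbhd nbhd_add_edge_r induced_edges_add_edge; last first.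
  by rewrite !inE e_irr eq_sym (negbTE huv) andbF.
by rewrite card_induced_edgesU1 1?setIC // inE e_sym hnadj.
Qed.

Lemma m_nbhd_add_edge_other w : w != u -> w != v ->
  m_nbhd e' w = (m_nbhd e w + (w \in common_nbhd))%N.
Proof.
move=> wu wv; rewrite /m_nbhd nbhd_add_edge_other // in_common_nbhd.
have [/andP [ewu ewv]|uvN] := boolP (e w u && e w v).
  rewrite induced_edges_add_edge_both ?inE // cardsU1.
  by rewrite nonedge_notin_induced_edges addn1.
by rewrite induced_edges_add_edge ?addn0 // !inE.
Qed.

End AddEdge.

Section CompleteBipartite.
Variables (T : finType) (e : rel T) (A : {set T}).
Hypothesis e_sym : symmetric e.

Lemma complete_bipartite_nbhd_in x : complete_bipartite_on e A ->
  x \in A -> nbhd e x = ~: A.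
Proof. by move=> eA xA; apply/setP => y; rewrite !inE eA xA. Qed.

Lemma complete_bipartite_nbhd_notin x : complete_bipartite_on e A ->
  x \notin A -> nbhd e x = A.
Proof.
by move=> eA xNA; apply/setP => y; rewrite !inE eA (negbTE xNA); case: (y \in A).
Qed.

Lemma complete_bipartite_induced_edgesC : complete_bipartite_on e A ->
  induced_edges e (~: A) = set0.
Proof.
move=> eA; apply/setP => P; rewrite in_set0.
apply/induced_edgesP => -[sub [x [y [exy defP]]]].
have /andP [] : (x \in ~: A) && (y \in ~: A).
  by rewrite !(subsetP sub) // defP !inE eqxx ?orbT.
by rewrite !inE => /negbTE xNA /negbTE yNA; move: exy; rewrite eA xNA yNA.
Qed.

Lemma complete_bipartite_onP :
  (forall x y, x \in A -> y \in A -> ~~ e x y) ->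
  (forall x, x \notin A -> nbhd e x = A) -> complete_bipartite_on e A.
Proof.
move=> indepA nbhdNA x y.
have e_notin z w : z \notin A -> e z w = (w \in A).
  by move=> zNA; rewrite -(nbhdNA z zNA) inE.
have [xA|xNA] := boolP (x \in A); last by rewrite e_notin //; case: (y \in A).
have [yA|yNA] := boolP (y \in A); first exact/negbTE/indepA.
by rewrite e_sym e_notin.
Qed.

End CompleteBipartite.

Local Open Scope ring_scope.

Lemma natr_bin2S (R : numFieldType) (c : nat) :
  ('C(c.+1, 2))%:R = (c.+1)%:R * c%:R / 2 :> R.
Proof.
have bin2S : (c.+1 * c = 2 * 'C(c.+1, 2))%N by rewrite -mul_bin_diag bin1.
by rewrite -natrM bin2S natrM; field.
Qed.

Lemma invr_natr_le1 (R : numFieldType) (b : nat) : (b%:R)^-1 <= 1 :> R.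
Proof. by case: b => [|b]; rewrite ?invr0 // invf_le1 ?ler1n. Qed.

Lemma ler_natr_div (R : numFieldType) (m a b : nat) :
  (0 < a)%N -> (a <= b)%N -> m%:R / b%:R <= m%:R / a%:R :> R.
Proof.
move=> a_gt0 ab; rewrite ler_wpM2l // lef_pV2 ?ler_nat // posrE ltr0n //.
exact: leq_trans ab.
Qed.

Lemma bin2_eq1 (d : nat) : 'C(d, 2) = 1%N -> d = 2%N.
Proof.
case: d => [|[|[|d]]] //; have := leq_bin2l 2 (isT : (3 <= d.+3)%N).
by move=> + C1; rewrite C1.
Qed.

Definition endpoint_gain (c : nat) : rat := c%:R / ('C(c.+1, 2))%:R.

Definition total_gain (c : nat) : rat := c%:R + 2 * endpoint_gain c.

Lemma endpoint_gainE (c : nat) : (0 < c)%N -> endpoint_gain c = 2 / (c.+1)%:R.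
Proof.
move=> c_gt0; have c0 : c%:R != 0 :> rat by rewrite pnatr_eq0 -lt0n c_gt0.
by rewrite /endpoint_gain natr_bin2S; field; rewrite c0 nat1r pnatr_eq0.
Qed.

Lemma total_gain_ltS (c : nat) : total_gain c < total_gain c.+1.
Proof.
case: c => [|c].
  rewrite /total_gain (endpoint_gainE (isT : (0 < 1)%N)) /endpoint_gain.
  by rewrite !mul0r mulr0 addr0; lra.
rewrite /total_gain !endpoint_gainE // -subr_gt0.
have c_ge0 : 0 <= c%:R :> rat by [].
rewrite (_ : _ - _ = (c%:R * c%:R + 5 * c%:R + 2) / ((c%:R + 3) * (c%:R + 2))).
  by apply: divr_gt0; nra.
by field; apply/andP; split; apply/eqP; lra.
Qed.

Lemma total_gain_mono : {mono total_gain : c c' / (c <= c')%N >-> c <= c'}.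
Proof. exact: le_mono (homo_ltn lt_trans total_gain_ltS). Qed.

Lemma clust_ratio_step_le (d m c : nat) : (m <= 'C(d, 2))%N -> (c <= d)%N ->
  (m + c)%:R / ('C(d.+1, 2))%:R - m%:R / ('C(d, 2))%:R <= endpoint_gain c.
Proof.
move=> m_le c_le.
have m_term : m%:R / ('C(d.+1, 2))%:R <= m%:R / ('C(d, 2))%:R :> rat.
  have [d_lt2|d_ge2] := ltnP d 2.
    by move: m_le; rewrite bin_small // leqn0 => /eqP ->; rewrite !mul0r.
  by apply: ler_natr_div; rewrite ?bin_gt0 ?leq_bin2l.
have c_term : c%:R / ('C(d.+1, 2))%:R <= endpoint_gain c.
  case: c c_le => [|c] c_le; first by rewrite /endpoint_gain !mul0r.
  by apply: ler_natr_div; rewrite ?bin_gt0 ?leq_bin2l.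
by rewrite natrD mulrDl; lra.
Qed.

(* The guard in [clust_vertex] is redundant since [x / 0 = 0] in [rat]. *)
Lemma clust_vertexE (T : finType) (e : rel T) (w : T) :
  clust_vertex e w = (m_nbhd e w)%:R / ('C(deg e w, 2))%:R.
Proof.
by rewrite /clust_vertex; case: leqP => // d_lt2; rewrite bin_small // invr0 mulr0.
Qed.

Section ClusteringGain.
Variables (T : finType) (e : rel T) (u v : T).
Hypotheses (e_sym : symmetric e) (e_irr : irreflexive e).
Hypotheses (huv : u != v) (hnadj : ~~ e u v).
Local Notation e' := (add_edge e u v).
Local Notation C := (common_nbhd e u v).

Definition clust_gain (w : T) : rat := clust_vertex e' w - clust_vertex e w.

Lemma clust_gain_l : clust_gain u <= endpoint_gain #|C|.
Proof.
rewrite /clust_gain !clust_vertexE deg_add_edge_l // m_nbhd_add_edge_l //.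
apply: clust_ratio_step_le; first exact: card_induced_edges_le.
exact/subset_leq_card/subsetIl.
Qed.

Lemma clust_gain_r : clust_gain v <= endpoint_gain #|C|.
Proof.
rewrite /clust_gain !clust_vertexE deg_add_edge_r // m_nbhd_add_edge_r //.
apply: clust_ratio_step_le; first exact: card_induced_edges_le.
exact/subset_leq_card/subsetIr.
Qed.

Lemma clust_gain_other w : w != u -> w != v ->
  clust_gain w = (w \in C)%:R / ('C(deg e w, 2))%:R.
Proof.
move=> wu wv; rewrite /clust_gain !clust_vertexE /deg nbhd_add_edge_other //.
by rewrite m_nbhd_add_edge_other // natrD mulrDl addrAC subrr add0r.
Qed.

Lemma notin_common_nbhd_l : u \notin C.
Proof. by rewrite in_common_nbhd // e_irr. Qed.

Lemma notin_common_nbhd_r : v \notin C.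
Proof. by rewrite in_common_nbhd // e_irr andbF. Qed.

Lemma common_nbhd_subC : C \subset ~: [set u; v].
Proof.
apply/subsetP => w wC; rewrite !inE; apply/norP.
split; apply: contraTneq wC => ->.
  exact: notin_common_nbhd_l.
exact: notin_common_nbhd_r.
Qed.

Lemma sum_clust_gain : \sum_w clust_gain w =
  clust_gain u + clust_gain v + \sum_(w in C) (('C(deg e w, 2))%:R)^-1.
Proof.
rewrite (bigD1 u) // (bigD1 v) 1?eq_sym //= addrA; congr (_ + _).
rewrite big_mkcond [RHS]big_mkcond; apply: eq_bigr => w _.
have [->|wu] /= := eqVneq w u; first by rewrite (negbTE notin_common_nbhd_l).
have [->|wv] /= := eqVneq w v; first by rewrite (negbTE notin_common_nbhd_r).
by rewrite clust_gain_other //; case: (w \in C); rewrite ?mul1r ?mul0r.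
Qed.

Lemma sum_inv_bin2_common_le :
  \sum_(w in C) (('C(deg e w, 2))%:R)^-1 <= #|C|%:R :> rat.
Proof.
by rewrite -sum1_card natr_sum; apply: ler_sum => w _; apply: invr_natr_le1.
Qed.

Lemma sum_clust_gain_le : \sum_w clust_gain w <= total_gain #|C|.
Proof.
rewrite sum_clust_gain /total_gain.
by have := clust_gain_l; have := clust_gain_r; have := sum_inv_bin2_common_le; lra.
Qed.

Lemma card_setC_pair : #|~: [set u; v]| = (#|T| - 2)%N.
Proof. by rewrite -[#|T|](cardsC [set u; v]) cards2 huv addKn. Qed.

Lemma card_common_nbhd_le : (#|C| <= #|T| - 2)%N.
Proof. by rewrite -card_setC_pair; apply: subset_leq_card common_nbhd_subC. Qed.

Lemma sum_clust_gain_le_max : \sum_w clust_gain w <= total_gain (#|T| - 2).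
Proof.
by apply: le_trans sum_clust_gain_le _; rewrite total_gain_mono card_common_nbhd_le.
Qed.

Lemma complete_bipartite_of_sum_clust_gain :
  \sum_w clust_gain w = total_gain (#|T| - 2) -> complete_bipartite_on e [set u; v].
Proof.
move=> sum_max.
have cardC : #|C| = (#|T| - 2)%N.
  apply/eqP; rewrite eqn_leq card_common_nbhd_le -total_gain_mono -sum_max.
  exact: sum_clust_gain_le.
have C_full : C = ~: [set u; v].
  by apply/eqP; rewrite eqEcard common_nbhd_subC card_setC_pair cardC /=.
have bin2_deg w : w \in C -> 'C(deg e w, 2) = 1%N.
  have sum0 : \sum_(w in C) (1 - (('C(deg e w, 2))%:R)^-1) = 0 :> rat.
    rewrite sumrB sumr_const; move: sum_max; rewrite sum_clust_gain /total_gain -cardC.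
    by have := sum_inv_bin2_common_le; have := clust_gain_l; have := clust_gain_r; lra.
  move=> wC; apply/eqP; rewrite -(eqr_nat rat) -invr_eq1 eq_sym -subr_eq0.
  apply/eqP; apply: (psumr_eq0P _ sum0) wC => x _.
  by rewrite subr_ge0 invr_natr_le1.
have nbhd_C w : w \notin [set u; v] -> nbhd e w = [set u; v].
  rewrite -in_setC -C_full => wC.
  apply/esym/eqP; rewrite eqEcard cards2 huv -/(deg e w) (bin2_eq1 (bin2_deg w wC)).
  rewrite andbT; apply/subsetP => z; move: wC; rewrite in_common_nbhd // => /andP [].
  by rewrite !inE => ewu ewv /orP [] /eqP ->.
apply: complete_bipartite_onP => // x y.
by rewrite !inE => /orP [] /eqP -> /orP [] /eqP ->; rewrite ?e_irr // e_sym.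
Qed.

Lemma sum_clust_gain_of_complete_bipartite :
  complete_bipartite_on e [set u; v] -> \sum_w clust_gain w = total_gain (#|T| - 2).
Proof.
move=> eK.
have nbhd_u := complete_bipartite_nbhd_in eK (set21 u v).
have nbhd_v := complete_bipartite_nbhd_in eK (set22 u v).
have C_full : C = ~: [set u; v] by rewrite /common_nbhd nbhd_u nbhd_v setIid.
have m_u : m_nbhd e u = 0%N.
  by rewrite /m_nbhd nbhd_u complete_bipartite_induced_edgesC ?cards0.
have m_v : m_nbhd e v = 0%N.
  by rewrite /m_nbhd nbhd_v complete_bipartite_induced_edgesC ?cards0.
have gain_u : clust_gain u = endpoint_gain #|C|.
  rewrite /clust_gain !clust_vertexE deg_add_edge_l // m_nbhd_add_edge_l // m_u.
  by rewrite /deg nbhd_u -C_full mul0r subr0.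
have gain_v : clust_gain v = endpoint_gain #|C|.
  rewrite /clust_gain !clust_vertexE deg_add_edge_r // m_nbhd_add_edge_r // m_v.
  by rewrite /deg nbhd_v -C_full mul0r subr0.
have sum_C : \sum_(w in C) (('C(deg e w, 2))%:R)^-1 = #|C|%:R :> rat.
  rewrite -sum1_card natr_sum; apply: eq_bigr => w.
  rewrite C_full inE => wNuv.
  by rewrite /deg (complete_bipartite_nbhd_notin eK wNuv) cards2 huv invr1.
rewrite sum_clust_gain gain_u gain_v sum_C -card_setC_pair -C_full /total_gain.
lra.
Qed.

Lemma clust_add_edgeE :
  clust e' = clust e + (\sum_w clust_gain w) / #|T|%:R.
Proof. by rewrite /clust /clust_gain sumrB mulrBl addrC subrK. Qed.

End ClusteringGain.

Lemma total_gain_subn2 (k : nat) : (3 <= k)%N ->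
  total_gain (k - 2) / k%:R = 1 - 2 / k%:R + 4 / (k%:R * (k%:R - 1)).
Proof.
case: k => [|[|[|k]]] // _; rewrite !subSS subn0 /total_gain endpoint_gainE //.
have k_ge0 : 0 <= k%:R :> rat by [].
by field; apply/andP; split; apply/eqP; lra.
Qed.

Theorem theorem4 (T : finType) (e : rel T)
  (e_sym : symmetric e) (e_irr : irreflexive e)
  (hn : (3 <= #|T|)%N) (u v : T) (huv : u != v) (hnadj : ~~ e u v) :
  let n : rat := (#|T|)%:R in
  clust (add_edge e u v) <= clust e + (1 - 2 / n + 4 / (n * (n - 1)))
  /\
  (clust (add_edge e u v) = clust e + (1 - 2 / n + 4 / (n * (n - 1)))
   <-> complete_bipartite_on e [set u; v]).
Proof.
move=> n; rewrite /n -total_gain_subn2 // clust_add_edgeE //.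
have n_inv_gt0 : 0 < (#|T|%:R : rat)^-1 by rewrite invr_gt0 ltr0n; case: #|T| hn.
split.
  by rewrite lerD2l ler_pM2r // sum_clust_gain_le_max.
split=> [/addrI /(mulIf (lt0r_neq0 n_inv_gt0))|].
  exact: complete_bipartite_of_sum_clust_gain.
by move/sum_clust_gain_of_complete_bipartite ->.
Qed.
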